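(* Let $N$ be the point-line configuration on $[7]$ with lines $\{3,4,6\},\{2,6,7\},\{1,5,6\},\{2,3,5\},\{1,4,7\}$. Then, in $\mathbb{C}^{21}$, \[ V_{\mathcal{C}(N)}=V_N\cup V_{U_{2,7}}\cup V_{N(6)}. \]
   Context: A point-line configuration on $[d]$ is a simple matroid of rank at most $3$ whose lines are the maximal subsets of size $\ge3$ and rank $2$ (a $3$-subset is dependent iff it lies in a line; every subset of size $\ge4$ is dependent). $U_{2,7}$ is the uniform matroid of rank $2$ on $[7]$ (a subset is dependent iff it has size $\ge3$). $N(6)$ is the matroid obtained from $N$ by making $6$ a loop: its circuits are $\mathcal{C}(N\setminus 6)\cup\{\{6\}\}$, where $N\setminus6$ is the restriction of $N$ to $[7]\setminus\{6\}$. For a matroid $K$ on $[d]$ of rank $\le3$: a realization is $\gamma\in(\mathbb{C}^3)^d$ such that for all $S\subseteq[d]$, $(\gamma_s)_{s\in S}$ is linearly dependent iff $S$ is dependent in $K$; $V_K$ is the Zariski closure in $\mathbb{C}^{3d}$ of the set of realizations; the circuit variety $V_{\mathcal{C}(K)}$ is the set of $\gamma\in(\mathbb{C}^3)^d$ such that $(\gamma_s)_{s\in S}$ is linearly dependent for every dependent set $S$ of $K$. *)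

From HB Require Import structures.
From mathcomp Require Import all_boot all_order all_algebra.
From mathcomp Require Import reals complex.
From mathcomp Require mpoly.
Set Implicit Arguments. Unset Strict Implicit. Unset Printing Implicit Defensive.
Import GRing.Theory Num.Theory.
Local Open Scope ring_scope.

(* Ground set [7] = {1,...,7}; element i of [7] is the ordinal i-1 of 'I_7. *)
Definition el (i : nat) : 'I_7 := inord i.-1.

(* A matroid on [7] is given by its predicate of dependent sets. *)
Definition matroid7 := {set 'I_7} -> bool.

(* Point-line configuration with a given list of lines (rank <= 3, simple):
   subsets of size >= 4 are dependent, a 3-subset is dependent iff it lies
   in a line, subsets of size <= 2 are independent. *)
Definition plc_dep (lines : seq {set 'I_7}) : matroid7 := fun S =>
  (3 < #|S|)%N || ((#|S| == 3)%N && seq.has (fun L : {set 'I_7} => S \subset L) lines).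

Definition N_lines : seq {set 'I_7} :=
  [:: [set el 3; el 4; el 6]; [set el 2; el 6; el 7]; [set el 1; el 5; el 6];
      [set el 2; el 3; el 5]; [set el 1; el 4; el 7]].

Definition N_dep : matroid7 := plc_dep N_lines.

Definition U27_dep : matroid7 := fun S => (2 < #|S|)%N.

Definition is_circuit (dep : matroid7) (C : {set 'I_7}) : bool :=
  dep C && [forall D : {set 'I_7}, (D \proper C) ==> ~~ dep D].

Definition dep_of_circuits (circ : pred {set 'I_7}) : matroid7 := fun S =>
  [exists C : {set 'I_7}, circ C && (C \subset S)].

(* circuits of the deletion K \ e, viewed as subsets of [7] avoiding e *)
Definition deletion_circuit (dep : matroid7) (e : 'I_7) : pred {set 'I_7} :=
  fun C => is_circuit dep C && (e \notin C).

Definition make_loop (dep : matroid7) (e : 'I_7) : matroid7 :=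
  dep_of_circuits (fun C => deletion_circuit dep e C || (C == [set e])).

Definition N6_dep : matroid7 := make_loop N_dep (el 6).

Section Varieties.
Variable R : realType.
Local Notation C := (R[i]).

(* A point of (C^3)^7 = C^21: a 7x3 matrix whose s-th row is gamma_s. *)
Definition conf := 'M[C]_(7, 3).

Definition lin_dep (g : conf) (S : {set 'I_7}) : Prop :=
  exists c : 'rV[C]_7,
    c != 0 /\ (forall s, s \notin S -> c 0 s = 0) /\ c *m g = 0.

Definition coords (g : conf) : 'I_(7 * 3) -> C := fun k => mxvec g 0 k.

Definition zariski_closure (A : conf -> Prop) : conf -> Prop := fun g =>
  forall p : mpoly.mpoly (7 * 3) C,
    (forall h, A h -> mpoly.meval (coords h) p = 0) ->
    mpoly.meval (coords g) p = 0.

Definition is_realization (dep : matroid7) (g : conf) : Prop :=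
  forall S : {set 'I_7}, lin_dep g S <-> dep S.

Definition V (dep : matroid7) : conf -> Prop :=
  zariski_closure (is_realization dep).

Definition circuit_variety (dep : matroid7) : conf -> Prop := fun g =>
  forall S : {set 'I_7}, dep S -> lin_dep g S.

End Varieties.

From HB Require Import structures.
From mathcomp Require Import all_boot all_order all_algebra.
From mathcomp Require Import reals complex ring mpoly.
Set Implicit Arguments. Unset Strict Implicit. Unset Printing Implicit Defensive.
Import GRing.Theory Num.Theory.
Local Open Scope ring_scope.

(* Points of [C^3] are triples; the points [x] with [dot x n = 0] form the line [n] of the
   projective plane and are the [cross n y].  Let [g] satisfy the five line conditions of [N],
   which cut out its circuit variety, and let [O] be its point 6 and [n1], [n2] the lines
   {2,3,5} and {1,4,7}.  If [O = 0], [g] is a point of an explicit polynomial chart of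
   realizations of [N(6)]; if [O] lies on both lines and [n1], [n2] are proportional, all
   points lie on one line and [g] is in a chart of [U_{2,7}].  Otherwise, each of the three
   pairs of points collinear with [O] can be moved along a straight line of configurations
   into a chart of [N], so [g] lies on a line whose other points are in charts of [N].
   A chart lies in [V_K] because its certificate minors are nonzero polynomials (nonzero at
   an explicit integer point), and points of a line lie in the closure of its generic points.
   Conversely the five line minors vanish on every realization of [N], [U_{2,7}] and [N(6)]. *)

(** * Vectors of [T^3] *)

Section Vec3.
Variable T : comNzRingType.

Definition vec3 := (T * T * T)%type.
Definition vx (u : vec3) := u.1.1.
Definition vy (u : vec3) := u.1.2.
Definition vz (u : vec3) := u.2.
Definition vec0 : vec3 := (0, 0, 0).
Definition vadd (u v : vec3) : vec3 := (vx u + vx v, vy u + vy v, vz u + vz v).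
Definition vscale (a : T) (u : vec3) : vec3 := (a * vx u, a * vy u, a * vz u).
Definition dot (u v : vec3) := vx u * vx v + vy u * vy v + vz u * vz v.
Definition cross (u v : vec3) : vec3 :=
  (vy u * vz v - vz u * vy v, vz u * vx v - vx u * vz v, vx u * vy v - vy u * vx v).
Definition det3 (u v w : vec3) := dot u (cross v w).
Definition vcomp (u : vec3) (j : 'I_3) : T :=
  match val j with 0 => vx u | 1 => vy u | _ => vz u end.

End Vec3.
Arguments vec0 {T}.

Definition vmap (T1 T2 : comNzRingType) (f : T1 -> T2) (u : vec3 T1) : vec3 T2 :=
  (f (vx u), f (vy u), f (vz u)).

Ltac vdestr := repeat match goal with
  | u : vec3 _ |- _ => let a := fresh "a" in let b := fresh "b" in let c := fresh "c" in
                       destruct u as [[a b] c]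
  end.
Ltac vunfold := rewrite /det3 /dot /cross /vadd /vscale /vec0 /vmap /vx /vy /vz /=.
Ltac vring := vdestr; vunfold; try congr (_, _, _); ring.

Section Vec3Identities.
Variable T : comNzRingType.
Implicit Types (a b c : T) (u v w x n : vec3 T).

Lemma vec3_eta u : (vx u, vy u, vz u) = u. Proof. by case: u => [[]]. Qed.
Lemma vadd0r u : vadd u vec0 = u. Proof. vring. Qed.
Lemma vscale0 u : vscale 0 u = vec0. Proof. vring. Qed.
Lemma vscale1 u : vscale 1 u = u. Proof. vring. Qed.
Lemma vscaler0 a : vscale a (@vec0 T) = vec0. Proof. vring. Qed.
Lemma cross0r u : cross u vec0 = vec0. Proof. vring. Qed.
Lemma cross0l u : cross vec0 u = vec0. Proof. vring. Qed.
Lemma dot0l u : dot vec0 u = 0. Proof. vring. Qed.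
Lemma dotC u v : dot u v = dot v u. Proof. vring. Qed.
Lemma dot_vscale a u v : dot (vscale a u) v = a * dot u v. Proof. vring. Qed.
Lemma vscaleA a b u : vscale a (vscale b u) = vscale (a * b) u. Proof. vring. Qed.
Lemma cross_vscaler a u v : cross u (vscale a v) = vscale a (cross u v). Proof. vring. Qed.
Lemma cross_vscale a b u v : cross (vscale a u) (vscale b v) = vscale (a * b) (cross u v).
Proof. vring. Qed.
Lemma crossC u v : cross u v = vscale (-1) (cross v u). Proof. vring. Qed.
Lemma det3_vscale a b c u v w :
  det3 (vscale a u) (vscale b v) (vscale c w) = a * b * c * det3 u v w.
Proof. vring. Qed.

Lemma det3_rot u v w : det3 u v w = det3 v w u. Proof. vring. Qed.
Lemma dot_cross_r u v : dot (cross u v) v = 0. Proof. vring. Qed.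
Lemma det3_swap12 u v w : det3 v u w = - det3 u v w. Proof. vring. Qed.
Lemma det3_swap23 u v w : det3 u w v = - det3 u v w. Proof. vring. Qed.
Lemma det3_eq12 u w : det3 u u w = 0. Proof. vring. Qed.
Lemma det3_eq13 u w : det3 u w u = 0. Proof. vring. Qed.
Lemma det3_eq23 u w : det3 w u u = 0. Proof. vring. Qed.

Lemma det3_cross_common n u v w : det3 (cross n u) (cross n v) (cross n w) = 0.
Proof. vring. Qed.

Lemma cross_cross n x e : cross n (cross x e) = vadd (vscale (dot n e) x) (vscale (- dot n x) e).
Proof. vring. Qed.

Lemma cramer3 u v w x :
  vscale (det3 u v w) x = vadd (vadd (vscale (dot x (cross v w)) u)
                                     (vscale (dot x (cross w u)) v))
                               (vscale (dot x (cross u v)) w).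
Proof. vring. Qed.

End Vec3Identities.

Section Vec3Field.
Variable F : fieldType.
Implicit Types (a b c : F) (u v w x y z n P : vec3 F).

Lemma vec3_eqP u v : vx u = vx v -> vy u = vy v -> vz u = vz v -> u = v.
Proof. by case: u => [[? ?] ?]; case: v => [[? ?] ?]; rewrite /vx /vy /vz /= => -> -> ->. Qed.

Lemma dot_neq0 u : u != vec0 -> exists e, dot u e != 0.
Proof.
case: u => [[a b] c] hu; rewrite /dot /vx /vy /vz /=.
have [a0|ha] := eqVneq a 0; first have [b0|hb] := eqVneq b 0.
- exists (0, 0, 1); apply: contra hu; rewrite /= a0 b0 !mulr0 mulr1 !add0r => /eqP ->.
  by [].
- by exists (0, 1, 0); rewrite /= !mulr0 mulr1 addr0 add0r.
- by exists (1, 0, 0); rewrite /= !mulr0 mulr1 !addr0.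
Qed.

Lemma vscale_eq0 a u : vscale a u = vec0 -> a = 0 \/ u = vec0.
Proof.
move=> hu; have [->|ha] := eqVneq a 0; [by left | right].
move: hu; case: u => [[x y] z]; rewrite /vscale /vec0 /vx /vy /vz /= => -[hx hy hz].
by congr (_, _, _); apply: (mulfI ha); rewrite mulr0.
Qed.

Lemma cross_eq0_parallel u P : P != vec0 -> cross u P = vec0 -> exists lam, u = vscale lam P.
Proof.
move=> hP huP; have [e he] := dot_neq0 hP.
have hu : vadd (vscale (dot e P) u) (vscale (- dot e u) P) = vec0.
  by rewrite -cross_cross huP cross0r.
have hp : dot e P != 0 by rewrite dotC.
exists (dot e u / dot e P).
have solve p q : dot e P * p + - dot e u * q = 0 -> p = dot e u / dot e P * q.
  by rewrite mulNr => /subr0_eq h; rewrite mulrAC -h mulrAC mulfV ?mul1r.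
move: hu; rewrite /vadd /vscale /vec0 /vx /vy /vz /= => -[h1 h2 h3].
by apply: vec3_eqP; apply: solve.
Qed.

Definition comb3 a b c u v w := vadd (vadd (vscale a u) (vscale b v)) (vscale c w).

Lemma det3_neq0_indep u v w a b c : det3 u v w != 0 -> comb3 a b c u v w = vec0 ->
  [/\ a = 0, b = 0 & c = 0].
Proof.
move=> hd hc.
have ea : a * det3 u v w = dot (comb3 a b c u v w) (cross v w) by rewrite /comb3; vring.
have eb : b * det3 u v w = dot (comb3 a b c u v w) (cross w u) by rewrite /comb3; vring.
have ec : c * det3 u v w = dot (comb3 a b c u v w) (cross u v) by rewrite /comb3; vring.
rewrite hc !dot0l in ea eb ec.
have coef0 t : t * det3 u v w = 0 -> t = 0.
  by move/eqP; rewrite mulf_eq0 (negPf hd) orbF => /eqP.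
by split; apply: coef0.
Qed.

Lemma det3_eq0_dep u v w : det3 u v w = 0 ->
  exists a b c, ~~ [&& a == 0, b == 0 & c == 0] /\ comb3 a b c u v w = vec0.
Proof.
move=> hd; have [vw0|vw] := eqVneq (cross v w) vec0.
  have [w0|wn] := eqVneq w vec0.
    by exists 0, 0, 1; rewrite oner_eq0 !eqxx /comb3 w0; split => //; vring.
  have [lam ->] := cross_eq0_parallel wn vw0.
  by exists 0, 1, (- lam); rewrite oner_eq0 andbF /comb3; split => //; vring.
have [e he] := dot_neq0 vw.
exists (dot e (cross v w)), (dot e (cross w u)), (dot e (cross u v)).
split; first by rewrite dotC (negPf he).
by rewrite /comb3 -cramer3 hd vscale0.
Qed.

Lemma vec3_dep4 u v w x : exists a b c d, ~~ [&& a == 0, b == 0, c == 0 & d == 0] /\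
  vadd (comb3 a b c u v w) (vscale d x) = vec0.
Proof.
have [hd|hd] := eqVneq (det3 u v w) 0.
  have [a [b [c [habc hc]]]] := det3_eq0_dep hd.
  by exists a, b, c, 0; rewrite eqxx andbT vscale0 vadd0r.
exists (dot x (cross v w)), (dot x (cross w u)), (dot x (cross u v)), (- det3 u v w).
rewrite oppr_eq0 (negPf hd) !andbF; split => //.
by rewrite /comb3 -cramer3; vring.
Qed.

Lemma orth_cross_surj n x : n != vec0 -> dot x n = 0 -> exists y, cross n y = x.
Proof.
move=> nn hx; have [e he] := dot_neq0 nn.
exists (vscale (dot n e)^-1 (cross x e)).
by rewrite cross_vscaler cross_cross (dotC n x) hx oppr0 vscale0 vadd0r vscaleA mulVf ?vscale1.
Qed.

Lemma det3_eq0_normal u v w : det3 u v w = 0 ->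
  exists n, [/\ n != vec0, dot u n = 0, dot v n = 0 & dot w n = 0].
Proof.
move=> hd.
have hdT : det3 (vx u, vx v, vx w) (vy u, vy v, vy w) (vz u, vz v, vz w) = 0.
  by rewrite -hd; vring.
have [a [b [c [habc hc]]]] := det3_eq0_dep hdT.
exists (a, b, c); move: hc; rewrite /comb3 /vadd /vscale /vx /vy /vz /= => -[e1 e2 e3].
split; first by apply: contraNneq habc => -[-> -> ->]; rewrite !eqxx.
- by rewrite /dot /vx /vy /vz /= -e1; ring.
- by rewrite /dot /vx /vy /vz /= -e2; ring.
- by rewrite /dot /vx /vy /vz /= -e3; ring.
Qed.

Lemma orth_witness n1 n2 : cross n1 n2 != vec0 -> exists w, dot w n1 = 0 /\ dot w n2 != 0.
Proof.
move=> hN; have [e he] := dot_neq0 hN.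
exists (cross n1 e); split; first by vring.
have -> : dot (cross n1 e) n2 = - dot (cross n1 n2) e by vring.
by rewrite oppr_eq0.
Qed.

End Vec3Field.

(** * Linear dependence of the points of a configuration *)

Definition i0 : 'I_3 := @Ordinal 3 0 isT.
Definition i1 : 'I_3 := @Ordinal 3 1 isT.
Definition i2 : 'I_3 := @Ordinal 3 2 isT.

Lemma ord3P (j : 'I_3) : [\/ j = i0, j = i1 | j = i2].
Proof.
by case: j => [[|[|[|k]]] hk]; [constructor 1|constructor 2|constructor 3|]; try exact: val_inj.
Qed.

Section Rows.
Variable R : realType.
Local Notation C := (R[i]).
Implicit Types (g : conf R) (S : {set 'I_7}) (r : seq 'I_7).

Definition rowv g (i : 'I_7) : vec3 C := (g i i0, g i i1, g i i2).
Definition mkconf (f : 'I_7 -> vec3 C) : conf R := \matrix_(i, j) vcomp (f i) j.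

Lemma rowv_mkconf f i : rowv (mkconf f) i = f i.
Proof. by rewrite /rowv !mxE /vcomp /=; case: (f i) => [[]]. Qed.

Lemma mkconf_rowv g : mkconf (rowv g) = g.
Proof.
by apply/matrixP => i j; rewrite mxE /vcomp /rowv /vx /vy /vz; case: (ord3P j) => ->.
Qed.

Lemma lin_depP g S : lin_dep g S <->
  exists c : 'I_7 -> C, [/\ exists s, c s != 0, forall s, s \notin S -> c s = 0 &
                           forall j, \sum_s c s * g s j = 0].
Proof.
split=> [[cv [cne [cS cz]]]|[c [[s cs] cS cz]]].
- exists (fun s => cv 0 s); split=> //.
  + apply/existsP; apply: contraR cne => /existsPn c0; apply/eqP/rowP => s.
    by rewrite mxE; move/negPn: (c0 s) => /eqP.
  + by move=> j; move/matrixP: cz => /(_ 0 j); rewrite !mxE.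
- exists (\row_s c s); split; last split.
  + by apply/eqP => /rowP /(_ s); rewrite !mxE; apply/eqP.
  + by move=> s' hs; rewrite mxE cS.
  + apply/matrixP => i j; rewrite !mxE (ord1 i) -[RHS](cz j).
    by apply: eq_bigr => k _; rewrite mxE.
Qed.

Lemma lin_dep_mono g S (T : {set 'I_7}) : S \subset T -> lin_dep g S -> lin_dep g T.
Proof.
move=> ST [c [cn [cS cz]]]; exists c; split=> //; split=> // s sT.
by apply: cS; apply: contra sT; apply: (subsetP ST).
Qed.

Lemma sum_supported (c X : 'I_7 -> C) r : uniq r -> (forall x, x \notin r -> c x = 0) ->
  \sum_x c x * X x = \sum_(i < size r) c (nth ord0 r i) * X (nth ord0 r i).
Proof.
move=> ur cr; transitivity (\sum_(x <- r) c x * X x); last by rewrite (big_nth ord0) big_mkord.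
rewrite [RHS]big_uniq // [RHS]big_mkcond; apply: eq_bigr => x _.
by case: ifPn => // /cr ->; rewrite mul0r.
Qed.

Lemma lin_dep_coefs g r (cs : seq C) : uniq r -> size cs = size r ->
  has (fun c => c != 0) cs ->
  (forall j, \sum_(i < size r) cs`_i * g (nth ord0 r i) j = 0) -> lin_dep g [set x in r].
Proof.
move=> ur hsz /(has_nthP 0) [k hk ck] hsum.
pose c x := cs`_(index x r).
have c_nth (i : 'I_(size r)) : c (nth ord0 r i) = cs`_i by rewrite /c index_uniq.
have c_out x : x \notin r -> c x = 0 by move/memNindex => hx; rewrite /c nth_default ?hx ?hsz.
apply/lin_depP; exists c; split.
- by exists (nth ord0 r k); rewrite /c index_uniq -?hsz.
- by move=> x; rewrite inE; apply: c_out.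
- move=> j; rewrite (sum_supported _ ur c_out) -[RHS](hsum j).
  by apply: eq_bigr => i _; rewrite c_nth.
Qed.

Lemma lin_dep_sub g S r : uniq r -> S \subset [set x in r] -> lin_dep g S ->
  exists c : 'I_7 -> C, (exists2 x, x \in r & c x != 0) /\
    forall j, \sum_(i < size r) c (nth ord0 r i) * g (nth ord0 r i) j = 0.
Proof.
move=> ur sS /lin_depP [c [[x cx] cS cz]].
have c_out y : y \notin r -> c y = 0.
  by move=> hy; apply: cS; apply: contra hy => /(subsetP sS); rewrite inE.
exists c; split=> [|j]; last by rewrite -(sum_supported (fun x => g x j) ur c_out).
by exists x => //; apply: contraR cx => /c_out ->.
Qed.

Lemma rows_comb3E g x y z a b c : comb3 a b c (rowv g x) (rowv g y) (rowv g z) = vec0 <->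
  forall j, a * g x j + b * g y j + c * g z j = 0.
Proof.
rewrite /comb3 /vadd /vscale /rowv /vec0 /vx /vy /vz /=; split=> [[h0 h1 h2] j|h].
- by case: (ord3P j) => ->.
- by rewrite !h.
Qed.

Lemma subset_seq_card k S : (k <= #|S|)%N ->
  exists r, [/\ uniq r, size r = k & [set x in r] \subset S].
Proof.
move=> hk; exists (take k (enum S)); split; first by rewrite take_uniq ?enum_uniq.
  by rewrite size_takel // -cardE.
by apply/subsetP => x; rewrite inE => /mem_take; rewrite mem_enum.
Qed.

Lemma lin_dep_card4 g S : (3 < #|S|)%N -> lin_dep g S.
Proof.
move=> /subset_seq_card [r [ur sz rS]].
apply: (lin_dep_mono rS); move: ur sz; case: r {rS} => [|a [|b [|d [|e [|]]]]] // ur _.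
have [ca [cb [cd [ce [nz hc]]]]] := vec3_dep4 (rowv g a) (rowv g b) (rowv g d) (rowv g e).
apply: (lin_dep_coefs (cs := [:: ca; cb; cd; ce])) => //.
- by move: nz; rewrite /= !negb_and !orbF.
- move=> j; rewrite !big_ord_recr big_ord0 /= add0r.
  by move: hc; rewrite /comb3 /vadd /vscale /rowv /vec0 /vx /vy /vz /= => -[];
     case: (ord3P j) => ->.
Qed.

Lemma set3_seq (x y z : 'I_7) : [set x; y; z] = [set w in [:: x; y; z]].
Proof. by apply/setP => w; rewrite !inE orbA. Qed.

Lemma lin_dep_zero_row g x : rowv g x = vec0 -> lin_dep g [set x].
Proof.
move=> hx; have -> : [set x] = [set y in [:: x]] by apply/setP => y; rewrite !inE.
apply: (lin_dep_coefs (cs := [:: 1])) => //=; first by rewrite oner_eq0.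
move=> j; rewrite big_ord_recr big_ord0 /= add0r mul1r.
by move: hx; rewrite /rowv /vec0 => -[]; case: (ord3P j) => ->.
Qed.

Lemma dep_of_det3 g x y z : uniq [:: x; y; z] ->
  det3 (rowv g x) (rowv g y) (rowv g z) = 0 -> lin_dep g [set x; y; z].
Proof.
move=> u /det3_eq0_dep [a [b [c [nz /rows_comb3E hc]]]]; rewrite set3_seq.
apply: (lin_dep_coefs (cs := [:: a; b; c])) => //.
- by move: nz; rewrite /= !negb_and !orbF.
- by move=> j; rewrite !big_ord_recr big_ord0 /= add0r hc.
Qed.

Lemma indep_of_det3 g x y z S : det3 (rowv g x) (rowv g y) (rowv g z) != 0 ->
  S \subset [set x; y; z] -> ~ lin_dep g S.
Proof.
move=> hd; rewrite set3_seq => hS hl.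
have u : uniq [:: x; y; z].
  have xy : x != y by apply: contraNneq hd => ->; rewrite det3_eq12.
  have xz : x != z by apply: contraNneq hd => ->; rewrite det3_eq13.
  have yz : y != z by apply: contraNneq hd => ->; rewrite det3_eq23.
  by rewrite /= !inE !negb_or xy xz yz.
have [c [[w win cw] hc]] := lin_dep_sub u hS hl.
have hv : comb3 (c x) (c y) (c z) (rowv g x) (rowv g y) (rowv g z) = vec0.
  by apply/rows_comb3E => j; move: (hc j); rewrite !big_ord_recr big_ord0 /= add0r.
have [cx cy cz] := det3_neq0_indep hd hv.
by move: win cw; rewrite !inE => /or3P [] /eqP ->; rewrite ?cx ?cy ?cz eqxx.
Qed.

Lemma lin_dep_det3 g x y z : lin_dep g [set x; y; z] -> det3 (rowv g x) (rowv g y) (rowv g z) = 0.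
Proof. by move=> hl; apply/eqP; apply: contraPT hl => /indep_of_det3; apply. Qed.

Lemma indep_of_det3_pair g x y (w : vec3 C) S : det3 (rowv g x) (rowv g y) w != 0 ->
  S \subset [set x; y] -> ~ lin_dep g S.
Proof.
have -> : [set x; y] = [set v in [:: x; y]] by apply/setP => v; rewrite !inE.
move=> hd hS hl.
have u : uniq [:: x; y].
  by rewrite /= inE andbT; apply: contraNneq hd => ->; rewrite det3_eq12.
have [c [[v vin cv] hc]] := lin_dep_sub u hS hl.
have hv : comb3 (c x) (c y) 0 (rowv g x) (rowv g y) w = vec0.
  rewrite /comb3 vscale0 vadd0r /vadd /vscale /rowv /vec0 /vx /vy /vz /=.
  by move: (hc i0) (hc i1) (hc i2); rewrite !big_ord_recr !big_ord0 /= !add0r => -> -> ->.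
have [cx cy _] := det3_neq0_indep hd hv.
by move: vin cv; rewrite !inE => /orP [] /eqP ->; rewrite ?cx ?cy eqxx.
Qed.

Lemma lin_dep_card3 g S :
  (forall x y z, uniq [:: x; y; z] -> det3 (rowv g x) (rowv g y) (rowv g z) = 0) ->
  (2 < #|S|)%N -> lin_dep g S.
Proof.
move=> h3 /subset_seq_card [r [ur sz rS]].
apply: (lin_dep_mono rS); move: ur sz; case: r {rS} => [|x [|y [|z [|]]]] // u _.
by rewrite -set3_seq; apply: dep_of_det3 (h3 _ _ _ u).
Qed.

End Rows.

(* A subset of [[7]] is encoded by its list of 7 membership bits, so that properties of
   all 128 subsets can be decided by computation; [nset l] is the subset with 0-based
   indices [l]. *)
Definition nset (l : seq nat) : {set 'I_7} := [set x : 'I_7 | val x \in l].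
Definition mask7 (S : {set 'I_7}) : seq bool := [seq (inord k : 'I_7) \in S | k <- iota 0 7].
Definition mask_sub (m : seq bool) (l : seq nat) : bool :=
  all (fun k => nth false m k ==> (k \in l)) (iota 0 7).
Definition mask_has (m : seq bool) (l : seq nat) : bool := all (nth false m) l.

Implicit Types (S : {set 'I_7}) (m : seq bool) (l : seq nat).

Fixpoint masks (n : nat) : seq (seq bool) :=
  if n is n'.+1 then [seq b :: m | b <- [:: true; false], m <- masks n'] else [:: [::]].

Lemma masksP m : m \in masks (size m).
Proof. by elim: m => //= b m IH; case: b; rewrite !mem_cat (map_f _ IH) ?orbT. Qed.

Lemma size_mask7 S : size (mask7 S) = 7.
Proof. by rewrite size_map size_iota. Qed.

Lemma mask7_in S : mask7 S \in masks 7.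
Proof. by have := masksP (mask7 S); rewrite size_mask7. Qed.

Lemma nth_mask7 S k : (k < 7)%N -> nth false (mask7 S) k = ((inord k : 'I_7) \in S).
Proof. by move=> hk; rewrite (nth_map 0) ?size_iota // nth_iota. Qed.

Lemma card_mask7 S : #|S| = count id (mask7 S).
Proof.
have enum7 : enum 'I_7 = map inord (iota 0 7).
  by rewrite -val_enum_ord -map_comp (eq_map (@inord_val 6)) map_id.
by rewrite cardE /enum_mem -enumT size_filter enum7 !count_map.
Qed.

Lemma mask_subP S l : (S \subset nset l) = mask_sub (mask7 S) l.
Proof.
apply/subsetP/allP => [H k|H x xS].
- rewrite mem_iota add0n => /andP [_ k7]; rewrite nth_mask7 //; apply/implyP => /H.
  by rewrite /nset inE /= inordK.
- have xi : val x \in iota 0 7 by rewrite mem_iota ltn_ord.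
  have /implyP := H _ xi.
  by rewrite nth_mask7 ?ltn_ord // inord_val /nset inE; apply.
Qed.

Lemma mask_hasP S l : mask_has (mask7 S) l -> nset l \subset S.
Proof.
move=> /allP H; apply/subsetP => x; rewrite /nset inE => /H.
by rewrite nth_mask7 ?ltn_ord // inord_val.
Qed.

Lemma nset3 a b c : (a < 7)%N -> (b < 7)%N -> (c < 7)%N ->
  nset [:: a; b; c] = [set inord a; inord b; inord c].
Proof.
move=> ha hb hc; apply/setP => x.
by rewrite /nset !inE -!(inj_eq val_inj) /= !inordK // orbA.
Qed.

Lemma nset_sub l : nset l \subset [set x in map inord l].
Proof. by apply/subsetP => x; rewrite /nset !inE => /(map_f (@inord 6)); rewrite inord_val. Qed.

(** * Realizations from certificates *)

Section Realization.
Variable R : realType.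
Local Notation C := (R[i]).
Implicit Types g : conf R.

Definition crow g (k : nat) := rowv g (inord k).

Lemma realization_of_certs (dep : matroid7) (DB : seq bool -> bool) (gens : seq (seq nat))
    (certs : seq (nat * nat * nat)) g :
  (forall S, dep S = DB (mask7 S)) ->
  all (fun m => DB m ==> (3 < count id m)%N || has (mask_has m) gens) (masks 7) ->
  all (fun m => ~~ DB m ==> has (fun c => mask_sub m [:: c.1.1; c.1.2; c.2]) certs) (masks 7) ->
  (forall t, t \in gens -> lin_dep g (nset t)) ->
  (forall c, c \in certs -> det3 (crow g c.1.1) (crow g c.1.2) (crow g c.2) != 0) ->
  is_realization dep g.
Proof.
move=> depE /allP hdep /allP hindep hgens hcerts S; rewrite depE; split=> [hl|].
- apply/negPn/negP => /(implyP (hindep _ (mask7_in S))) /hasP [c cin].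
  rewrite -mask_subP => hS; apply: (indep_of_det3 (hcerts c cin)) hl.
  by rewrite set3_seq; apply: subset_trans hS (nset_sub _).
- move=> /(implyP (hdep _ (mask7_in S))) /orP [|/hasP [t tin /mask_hasP tS]].
  + by rewrite -card_mask7; apply: lin_dep_card4.
  + exact: lin_dep_mono tS (hgens t tin).
Qed.

Lemma realization_U27 (certs : seq (nat * nat)) (w : vec3 C) g :
  (forall x y z, uniq [:: x; y; z] -> det3 (rowv g x) (rowv g y) (rowv g z) = 0) ->
  all (fun m => (count id m <= 2)%N ==> has (fun c => mask_sub m [:: c.1; c.2]) certs) (masks 7) ->
  (forall c, c \in certs -> det3 (crow g c.1) (crow g c.2) w != 0) ->
  is_realization U27_dep g.
Proof.
move=> h3 /allP hindep hcerts S; rewrite /U27_dep; split=> [hl|]; last exact: lin_dep_card3.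
apply/negPn/negP; rewrite -leqNgt card_mask7.
move=> /(implyP (hindep _ (mask7_in S))) /hasP [c cin].
rewrite -mask_subP => hS; apply: (indep_of_det3_pair (hcerts c cin)) hl.
have -> : [set inord c.1; inord c.2] = [set x in map inord [:: c.1; c.2]] :> {set 'I_7}.
  by apply/setP => x; rewrite !inE.
exact: subset_trans hS (nset_sub _).
Qed.

End Realization.

(** * The matroids [N], [U_{2,7}] and [N(6)] *)

(* The lines of [N] with 0-based indices: element [k] of [[7]] is [k.-1] here. *)
Definition Nlines : seq (seq nat) :=
  [:: [:: 2; 3; 5]; [:: 1; 5; 6]; [:: 0; 4; 5]; [:: 1; 2; 4]; [:: 0; 3; 6]].

Lemma N_linesE : N_lines = map nset Nlines.
Proof. by rewrite /N_lines /el /= !nset3. Qed.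

Definition N_mask m := (3 < count id m)%N || ((count id m == 3) && has (mask_sub m) Nlines).

Lemma N_depE S : N_dep S = N_mask (mask7 S).
Proof.
rewrite /N_dep /plc_dep /N_mask N_linesE has_map card_mask7.
by congr (_ || (_ && _)); apply: eq_has => l; rewrite /= mask_subP.
Qed.

Lemma N_dep_mono S (T : {set 'I_7}) : S \subset T -> N_dep S -> N_dep T.
Proof.
move=> ST; rewrite /N_dep /plc_dep => /orP [h|/andP [/eqP h3 hl]].
  by rewrite (leq_trans h (subset_leq_card ST)).
have [//|hT] := ltnP 3 #|T|.
have e : S = T by apply/eqP; rewrite eqEcard ST h3.
by rewrite -e h3 eqxx hl orbT.
Qed.

Lemma N6_depE S : N6_dep S = (el 6 \in S) || N_dep (S :\ el 6).
Proof.
apply/idP/idP.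
- move=> /existsP [D /andP [/orP [/andP [/andP [hD _] h6]|/eqP ->] DS]].
  + apply/orP; right; apply: N_dep_mono hD; apply/subsetP => x xD.
    by rewrite !inE (subsetP DS _ xD) andbT; apply: contraNneq h6 => <-.
  + by rewrite sub1set in DS; rewrite DS.
- case/orP => [h6|hd].
    by apply/existsP; exists [set el 6]; rewrite eqxx orbT sub1set h6.
  pose P D := N_dep D && (D \subset S :\ el 6).
  have [D /minsetP [/andP [hD DS] Dmin]] : {D | minset P D}.
    by apply: ex_minset; exists (S :\ el 6); rewrite /P hd subxx.
  apply/existsP; exists D; rewrite (subset_trans DS (subsetDl _ _)) andbT.
  rewrite /deletion_circuit /is_circuit hD /=; apply/orP; left; apply/andP; split.
    apply/forallP => E; apply/implyP => /properP [ED [x xD xE]]; apply/negP => hE.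
    by have := Dmin E; rewrite /P hE (subset_trans ED DS) => /(_ isT ED) eDE; rewrite eDE xD in xE.
  by apply/negP => h6; have := subsetP DS _ h6; rewrite !inE eqxx.
Qed.

Definition N6_mask m := nth false m 5 || N_mask (set_nth false m 5 false).

Lemma N6_dep_mask S : N6_dep S = N6_mask (mask7 S).
Proof.
have mask_del6 : mask7 (S :\ el 6) = set_nth false (mask7 S) 5 false.
  apply: (@eq_from_nth _ false); first by rewrite size_set_nth !size_mask7.
  move=> k; rewrite size_mask7 => k7; rewrite nth_set_nth /= !nth_mask7 // !inE.
  by rewrite /el -(inj_eq val_inj) /= !inordK //; case: (k == 5).
by rewrite N6_depE N_depE mask_del6 /N6_mask nth_mask7.
Qed.

Lemma U27_dep_mask S : U27_dep S = (2 < count id (mask7 S))%N.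
Proof. by rewrite /U27_dep card_mask7. Qed.

Definition nmask (t : seq nat) : seq bool := [seq k \in t | k <- iota 0 7].

Lemma mask7_nset t : mask7 (nset t) = nmask t.
Proof.
apply/eq_in_map => k; rewrite mem_iota add0n => /andP [_ k7].
by rewrite /nset inE /= inordK.
Qed.

Definition pairs7 : seq (nat * nat) :=
  [seq p <- [seq (i, j) | i <- iota 0 7, j <- iota 0 7] | (p.1 < p.2)%N].
Definition triples7 : seq (nat * nat * nat) :=
  [seq c <- [seq (p, k) | p <- pairs7, k <- iota 0 7] | (c.1.2 < c.2)%N].
Definition N_bases := [seq c <- triples7 | ~~ N_mask (nmask [:: c.1.1; c.1.2; c.2])].
Definition N6_bases := [seq c <- triples7 | ~~ N6_mask (nmask [:: c.1.1; c.1.2; c.2])].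

Definition N6_gens : seq (seq nat) := [:: [:: 5]; [:: 1; 2; 4]; [:: 0; 3; 6]].

Lemma N_generated :
  all (fun m => N_mask m ==> (3 < count id m)%N || has (mask_has m) Nlines) (masks 7).
Proof. by vm_compute. Qed.
Lemma N_certified :
  all (fun m => ~~ N_mask m ==> has (fun c => mask_sub m [:: c.1.1; c.1.2; c.2]) N_bases) (masks 7).
Proof. by vm_compute. Qed.
Lemma N6_generated :
  all (fun m => N6_mask m ==> (3 < count id m)%N || has (mask_has m) N6_gens) (masks 7).
Proof. by vm_compute. Qed.
Lemma N6_certified :
  all (fun m => ~~ N6_mask m ==> has (fun c => mask_sub m [:: c.1.1; c.1.2; c.2]) N6_bases)
    (masks 7).
Proof. by vm_compute. Qed.
Lemma U27_certified :
  all (fun m => (count id m <= 2)%N ==> has (fun c => mask_sub m [:: c.1; c.2]) pairs7) (masks 7).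
Proof. by vm_compute. Qed.
Lemma Nlines_masks :
  all (fun t => [&& N_mask (nmask t), 2 < count id (nmask t) & N6_mask (nmask t)])%N Nlines.
Proof. by vm_compute. Qed.

Lemma Nlines_N_dep t : t \in Nlines -> N_dep (nset t).
Proof. by move=> tin; rewrite N_depE mask7_nset; case/and3P: (allP Nlines_masks t tin). Qed.

Lemma Nlines_U27_dep t : t \in Nlines -> U27_dep (nset t).
Proof. by move=> tin; rewrite U27_dep_mask mask7_nset; case/and3P: (allP Nlines_masks t tin). Qed.

Lemma Nlines_N6_dep t : t \in Nlines -> N6_dep (nset t).
Proof. by move=> tin; rewrite N6_dep_mask mask7_nset; case/and3P: (allP Nlines_masks t tin). Qed.

Section LineDets.
Variable R : realType.
Local Notation C := (R[i]).
Implicit Types g : conf R.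

Definition ldet g (t : seq nat) :=
  det3 (crow g (nth 0 t 0)) (crow g (nth 0 t 1)) (crow g (nth 0 t 2)).

Definition is_triple7 (t : seq nat) := [&& size t == 3, all (fun k => k < 7)%N t & uniq t].

Lemma Nlines_triples : all is_triple7 Nlines. Proof. by []. Qed.

Lemma lin_dep_nsetE g t : is_triple7 t -> lin_dep g (nset t) <-> ldet g t = 0.
Proof.
case: t => [|a [|b [|c [|? ?]]]] //= /and3P [_ /and4P [ha hb hc _]].
rewrite /= !inE !negb_or andbT => /andP [/andP [ab ac] bc]; rewrite nset3 //.
split; first exact: lin_dep_det3.
apply: dep_of_det3; rewrite /= !inE !negb_or -!(inj_eq val_inj) /= !inordK //.
by rewrite ab ac bc.
Qed.

Lemma lin_dep_Nlines g t : t \in Nlines -> lin_dep g (nset t) <-> ldet g t = 0.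
Proof. by move=> tin; apply: lin_dep_nsetE; apply: (allP Nlines_triples). Qed.

Lemma realization_N g : (forall t, t \in Nlines -> ldet g t = 0) ->
  (forall c, c \in N_bases -> det3 (crow g c.1.1) (crow g c.1.2) (crow g c.2) != 0) ->
  is_realization N_dep g.
Proof.
move=> hl; apply: (realization_of_certs N_depE N_generated N_certified) => t tin.
by apply/lin_dep_Nlines => //; apply: hl.
Qed.

Lemma realization_N6 g : crow g 5 = vec0 -> ldet g [:: 1; 2; 4] = 0 -> ldet g [:: 0; 3; 6] = 0 ->
  (forall c, c \in N6_bases -> det3 (crow g c.1.1) (crow g c.1.2) (crow g c.2) != 0) ->
  is_realization N6_dep g.
Proof.
move=> h5 h1 h2; apply: (realization_of_certs N6_dep_mask N6_generated N6_certified) => t.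
rewrite !inE => /or3P [] /eqP ->; last 2 first.
- by apply/lin_dep_nsetE.
- by apply/lin_dep_nsetE.
have -> : nset [:: 5] = [set inord 5].
  by apply/setP => x; rewrite /nset !inE -(inj_eq val_inj) /= inordK.
exact: lin_dep_zero_row.
Qed.

Lemma circuit_variety_N_lines g :
  circuit_variety N_dep g <-> forall t, t \in Nlines -> ldet g t = 0.
Proof.
split=> [hCV t tin|hl S].
  by apply/lin_dep_Nlines => //; apply/hCV/Nlines_N_dep.
rewrite N_depE => /(implyP (allP N_generated _ (mask7_in S))) /orP [|/hasP [t tin /mask_hasP tS]].
  by rewrite -card_mask7; apply: lin_dep_card4.
by apply: lin_dep_mono tS _; apply/lin_dep_Nlines => //; apply: hl.
Qed.

End LineDets.

(** * Zariski closure along polynomial curves *)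

Lemma poly0_nonzero_roots (F : numDomainType) (p : {poly F}) :
  (forall x, x != 0 -> p.[x] = 0) -> p = 0.
Proof.
move=> p0; apply: (@roots_geq_poly_eq0 _ p [seq k.+1%:R | k <- iota 0 (size p)]).
- by apply/allP => x /mapP [k _ ->]; apply/eqP/p0; rewrite pnatr_eq0.
- by rewrite map_inj_uniq ?iota_uniq // => a b /eqP; rewrite eqr_nat eqSS => /eqP.
- by rewrite size_map size_iota.
Qed.

Section ZariskiClosure.
Variable R : realType.
Local Notation C := (R[i]).
Implicit Types (A : conf R -> Prop) (g : conf R).

Lemma zariski_closure_sub A g : A g -> zariski_closure A g.
Proof. by move=> hA p; apply. Qed.

Definition eval_curve (G : 'I_7 -> vec3 {poly C}) (s : C) : conf R :=
  mkconf (fun i => vmap (horner_eval s) (G i)).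

(* A polynomial curve whose points lie in the closure of [A] outside the finitely many
   roots of [D] lies entirely in it: the composite of any polynomial vanishing on [A]
   with the curve is killed by [D]. *)
Lemma curve_closure A (G : 'I_7 -> vec3 {poly C}) (D : {poly C}) : D != 0 ->
  (forall s, D.[s] != 0 -> zariski_closure A (eval_curve G s)) ->
  forall s, zariski_closure A (eval_curve G s).
Proof.
move=> Dn hG s0 p hp.
pose P : 'M[{poly C}]_(7, 3) := \matrix_(i, j) vcomp (G i) j.
pose q := \sum_(m <- msupp p) (p@_m)%:P * \prod_(k < 7 * 3) mxvec P 0 k ^+ m k.
have qE s : q.[s] = meval (coords (eval_curve G s)) p.
  rewrite mevalE horner_sum; apply: eq_bigr => m _.
  rewrite hornerM hornerC horner_prod; congr (_ * _); apply: eq_bigr => k _.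
  have -> : eval_curve G s = map_mx (horner_eval s) P.
    apply/matrixP => i j; rewrite !mxE /vcomp /vmap /vx /vy /vz /=.
    by case: (val j) => [|[|]].
  by rewrite horner_exp /coords -map_mxvec mxE.
have /eqP : q * D = 0.
  apply: poly0_nonzero_roots => s _; rewrite hornerM.
  have [->|hD] := eqVneq D.[s] 0; first by rewrite mulr0.
  by rewrite qE (hG s hD p hp) mul0r.
by rewrite mulf_eq0 (negbTE Dn) orbF -qE => /eqP ->; rewrite horner0.
Qed.

End ZariskiClosure.

(** * Charts *)

Lemma rmorph_det3 (T1 T2 : comNzRingType) (f : {rmorphism T1 -> T2}) (u v w : vec3 T1) :
  f (det3 u v w) = det3 (vmap f u) (vmap f v) (vmap f w).
Proof. by vdestr; vunfold; rewrite !(rmorphD, rmorphN, rmorphM). Qed.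

(* A chart is a family of points of [T^3], indexed by [nat], given by the same polynomial
   formulas in parameters [th : nat -> T] over every commutative ring [T]. *)
Definition chart := forall T : comNzRingType, (nat -> T) -> nat -> vec3 T.

Definition chart_natural (F : chart) := forall (T1 T2 : comNzRingType)
  (f : {rmorphism T1 -> T2}) th n, F T2 (fun j => f (th j)) n = vmap f (F T1 th n).

Definition chart_homogeneous (F : chart) (d : nat -> nat) :=
  forall (T : comNzRingType) th (s : T) n,
  F T (fun j => s * th j) n = vscale (s ^+ d n) (F T th n).

(* A certificate [(a, b, Some k)] asks for three independent points, [(a, b, None)] for two
   points independent from the fixed vector [pair_ref]. *)
Definition cert := (nat * nat * option nat)%type.

Definition pair_ref (T : comNzRingType) : vec3 T := (1, 1 + 1, 0).

Definition cdet (T : comNzRingType) (rows : nat -> vec3 T) (c : cert) : T :=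
  det3 (rows c.1.1) (rows c.1.2) (if c.2 is Some k then rows k else pair_ref T).

Definition cdeg (d : nat -> nat) (c : cert) : nat :=
  (d c.1.1 + d c.1.2 + if c.2 is Some k then d k else 0)%N.

Lemma rmorph_cdet (T1 T2 : comNzRingType) (f : {rmorphism T1 -> T2}) rows c :
  f (cdet rows c) = cdet (fun n => vmap f (rows n)) c.
Proof.
case: c => [[a b] [k|]]; rewrite /cdet rmorph_det3 //=.
by rewrite /pair_ref /vmap /= rmorphD rmorph1 rmorph0.
Qed.

Lemma cdet_scale (T : comNzRingType) (d : nat -> nat) (s : T) rows c :
  cdet (fun n => vscale (s ^+ d n) (rows n)) c = s ^+ cdeg d c * cdet rows c.
Proof.
case: c => [[a b] [k|]]; rewrite /cdet /cdeg /= ?addn0 ?exprD; first by rewrite det3_vscale.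
by rewrite /pair_ref; vring.
Qed.

Section ChartClosure.
Variable R : realType.
Local Notation C := (R[i]).
Variables (F : chart) (d : nat -> nat).
Hypotheses (Fnat : chart_natural F) (Fhom : chart_homogeneous F d).

Definition chart_conf (th : nat -> C) : conf R := mkconf (fun i => @F C th (val i)).

Definition param_line (a b : nat -> C) (j : nat) : {poly C} := (a j)%:P + 'X * (b j)%:P.

Lemma eval_param_line a b s :
  (fun n => vmap (horner_eval s) (@F _ (param_line a b) n)) = @F C (fun j => a j + s * b j).
Proof.
apply: boolp.funext => n; rewrite -Fnat; congr (@F C _ n).
by apply: boolp.funext => j; rewrite -[LHS]/((param_line a b j).[s]) !hornerE mulrC.
Qed.

(* The reversed polynomial, along [b + s a], takes at [0] the nonzero value of the
   certificate at [b]; homogeneity relates its other values to those along [a + s b]. *)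
Lemma cert_poly_neq0 a b c : cdet (@F C b) c != 0 -> cdet (@F _ (param_line a b)) c != 0.
Proof.
move=> hb; apply: contra hb => /eqP P0.
pose Q := cdet (@F _ (param_line b a)) c.
have Q0 : Q = 0.
  apply: poly0_nonzero_roots => u un.
  rewrite -horner_evalE rmorph_cdet eval_param_line.
  have -> : @F C (fun j => b j + u * a j) =
            fun n => vscale (u ^+ d n) (@F C (fun j => a j + u^-1 * b j) n).
    apply: boolp.funext => n; rewrite -Fhom; congr (@F C _ n).
    by apply: boolp.funext => j; rewrite mulrDr mulrA mulfV // mul1r addrC.
  by rewrite cdet_scale -eval_param_line -rmorph_cdet P0 rmorph0 mulr0.
have := congr1 (horner_eval 0) Q0; rewrite rmorph0 rmorph_cdet eval_param_line => <-.
have -> : (fun j => b j + 0 * a j) = b.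
  by apply: boolp.funext => j; rewrite mul0r addr0.
by [].
Qed.

Lemma chart_closure (dep : matroid7) (certs : seq cert) (th1 : nat -> int) :
  (forall th, (forall c, c \in certs -> cdet (@F C th) c != 0) ->
     is_realization dep (chart_conf th)) ->
  all (fun c => cdet (@F int th1) c != 0) certs ->
  forall th0, V dep (chart_conf th0).
Proof.
move=> hreal /allP hcert th0.
pose t1 j : C := (th1 j)%:~R.
have cert_t1 c : c \in certs -> cdet (@F C t1) c != 0.
  have -> : @F C t1 = fun n => vmap intr (@F int th1 n).
    by apply: boolp.funext => n; apply: Fnat.
  by move=> cin; rewrite -rmorph_cdet intr_eq0 hcert.
pose D := \prod_(c <- certs) cdet (@F _ (param_line th0 t1)) c.
have Dn : D != 0.
  by rewrite prodf_seq_neq0; apply/allP => c cin; apply: cert_poly_neq0; apply: cert_t1.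
have curveE s : eval_curve (fun i => @F _ (param_line th0 t1) (val i)) s =
                chart_conf (fun j => th0 j + s * t1 j).
  by rewrite /eval_curve /chart_conf -eval_param_line.
suff /(_ 0) : forall s, V dep (chart_conf (fun j => th0 j + s * t1 j)).
  have -> // : (fun j => th0 j + 0 * t1 j) = th0.
  by apply: boolp.funext => j; rewrite mul0r addr0.
move=> s0; rewrite -curveE; apply: (curve_closure Dn) => s.
rewrite curveE horner_prod prodf_seq_neq0 => /allP Ds.
apply/zariski_closure_sub/hreal => c cin.
by rewrite -eval_param_line -rmorph_cdet; apply: Ds.
Qed.

End ChartClosure.

Section VmapRmorph.
Variables (T1 T2 : comNzRingType) (f : {rmorphism T1 -> T2}).

Lemma vmap_cross u v : vmap f (cross u v) = cross (vmap f u) (vmap f v).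
Proof. by vdestr; vunfold; rewrite !(rmorphB, rmorphM). Qed.

Lemma vmap_vscale a u : vmap f (vscale a u) = vscale (f a) (vmap f u).
Proof. by vdestr; vunfold; rewrite !rmorphM. Qed.

Lemma vmap_vec0 : vmap f vec0 = vec0.
Proof. by rewrite /vmap /vec0 /= rmorph0. Qed.

End VmapRmorph.

Definition pv (T : comNzRingType) (th : nat -> T) (k : nat) : vec3 T := (th k, th k.+1, th k.+2).

Lemma pv_map (T1 T2 : comNzRingType) (f : T1 -> T2) th k :
  pv (fun j => f (th j)) k = vmap f (pv th k).
Proof. by []. Qed.

Lemma pv_scale (T : comNzRingType) (th : nat -> T) s k :
  pv (fun j => s * th j) k = vscale s (pv th k).
Proof. by []. Qed.

Lemma cross_hom (T : comNzRingType) (s : T) u v :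
  cross (vscale s u) (vscale s v) = vscale (s ^+ 2) (cross u v).
Proof. by rewrite cross_vscale expr2. Qed.

Definition chart_U27 : chart := fun T th n =>
  if (n < 7)%N then cross (pv th 0) (pv th (3 + 3 * n)) else vec0.

Arguments chart_U27 : clear implicits.

Lemma chart_U27_natural : chart_natural chart_U27.
Proof. by move=> T1 T2 f th n; rewrite /chart_U27; case: ifP; rewrite ?vmap_cross ?vmap_vec0. Qed.

Lemma chart_U27_homogeneous : chart_homogeneous chart_U27 (fun=> 2%N).
Proof.
by move=> T th s n; rewrite /chart_U27 !pv_scale cross_hom; case: ifP; rewrite ?vscaler0.
Qed.

Definition chart_N6 : chart := fun T th n =>
  match n with
  | 1 | 2 | 4 => cross (pv th 0) (pv th (6 + 3 * n))
  | 0 | 3 | 6 => cross (pv th 3) (pv th (6 + 3 * n))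
  | _ => vec0 end.

Arguments chart_N6 : clear implicits.

Lemma chart_N6_natural : chart_natural chart_N6.
Proof.
move=> T1 T2 f th n; rewrite /chart_N6.
by case: n => [|[|[|[|[|[|[|n]]]]]]]; rewrite ?vmap_cross ?vmap_vec0.
Qed.

Lemma chart_N6_homogeneous : chart_homogeneous chart_N6 (fun=> 2%N).
Proof.
move=> T th s n; rewrite /chart_N6 !pv_scale.
by case: n => [|[|[|[|[|[|[|n]]]]]]]; rewrite ?cross_hom ?vscaler0.
Qed.

(* A pair collinear with [O], with one point on each of the lines [n1] and [n2]: the point
   chosen by [b] is free on its line, the other one is a multiple of the intersection of its
   line with the line through [O] and the free point. *)
Definition pair_pts (T : comNzRingType) (O n1 n2 y : vec3 T) (lam : T) (b : bool) :=
  if b then (cross n1 y, cross n2 (vscale lam (cross O (cross n1 y))))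
  else (cross n1 (vscale lam (cross O (cross n2 y))), cross n2 y).

Definition chart_N (bA bB bC : bool) : chart := fun T th n =>
  let O := pv th 0 in let n1 := pv th 3 in let n2 := pv th 6 in
  let pA := pair_pts O n1 n2 (pv th 9) (th 18) bA in
  let pB := pair_pts O n1 n2 (pv th 12) (th 19) bB in
  let pC := pair_pts O n1 n2 (pv th 15) (th 20) bC in
  match n with
  | 0 => pC.2 | 1 => pB.1 | 2 => pA.1 | 3 => pA.2 | 4 => pC.1 | 5 => O | 6 => pB.2
  | _ => vec0 end.

Arguments chart_N : clear implicits.

Definition chart_N_deg (bA bB bC : bool) (n : nat) : nat :=
  let d1 b := if b then 2 else 5 in let d2 b := if b then 5 else 2 in
  match n with
  | 0 => d2 bC | 1 => d1 bB | 2 => d1 bA | 3 => d2 bA | 4 => d1 bC | 5 => 1 | 6 => d2 bB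
  | _ => 0 end%N.

Lemma pair_pts_natural (T1 T2 : comNzRingType) (f : {rmorphism T1 -> T2}) O n1 n2 y lam b :
  pair_pts (vmap f O) (vmap f n1) (vmap f n2) (vmap f y) (f lam) b =
  (vmap f (pair_pts O n1 n2 y lam b).1, vmap f (pair_pts O n1 n2 y lam b).2).
Proof. by case: b; rewrite /pair_pts /= ?(vmap_cross, vmap_vscale). Qed.

Lemma pair_pts_hom (T : comNzRingType) (s : T) O n1 n2 y lam b :
  pair_pts (vscale s O) (vscale s n1) (vscale s n2) (vscale s y) (s * lam) b =
  (vscale (s ^+ (if b then 2 else 5)) (pair_pts O n1 n2 y lam b).1,
   vscale (s ^+ (if b then 5 else 2)) (pair_pts O n1 n2 y lam b).2).
Proof.
by case: b; rewrite /pair_pts /= !cross_vscale ?vscaleA ?cross_vscaler ?vscaleA;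
  congr (_, _); congr vscale; ring.
Qed.

Lemma chart_N_natural bA bB bC : chart_natural (chart_N bA bB bC).
Proof.
move=> T1 T2 f th n; rewrite /chart_N !pv_map !pair_pts_natural.
by case: n => [|[|[|[|[|[|[|n]]]]]]] //=; rewrite vmap_vec0.
Qed.

Lemma chart_N_homogeneous bA bB bC : chart_homogeneous (chart_N bA bB bC) (chart_N_deg bA bB bC).
Proof.
move=> T th s n; rewrite /chart_N !pv_scale !pair_pts_hom.
by case: n => [|[|[|[|[|[|[|n]]]]]]] //=; rewrite ?expr1 ?vscaler0.
Qed.

Definition some_certs (ts : seq (nat * nat * nat)) : seq cert :=
  [seq (t.1.1, t.1.2, Some t.2) | t <- ts].
Definition pair_certs (ps : seq (nat * nat)) : seq cert := [seq (p.1, p.2, None) | p <- ps].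

Definition witness_N (j : nat) : int :=
  nth 0 [:: 0; 0; 1; 0; 2; 1; 2; 1; 1; -2; 2; 0; 0; -1; 0; 1; 0; 0; 1; 1; 1]%R j.
Definition witness_N6 (j : nat) : int :=
  nth 0 [:: -1; -2; -1; 0; 1; -1; 1; 2; -1; -2; -2; 0; -2; -2; -1; 0; 0; -1; 0; -1; 0;
            0; 0; 0; 1; 2; 0]%R j.
Definition witness_U27 (j : nat) : int :=
  nth 0 [:: 1; 0; -1; -2; 0; 1; -1; -1; -1; -2; 1; 1; 2; -2; -2; -1; 1; 2; 0; 1; -2;
            1; 1; 2]%R j.

Lemma witness_N_certs bA bB bC :
  all (fun c => cdet (chart_N bA bB bC int witness_N) c != 0) (some_certs N_bases).
Proof. by case: bA; case: bB; case: bC; vm_compute. Qed.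
Lemma witness_N6_certs : all (fun c => cdet (chart_N6 int witness_N6) c != 0) (some_certs N6_bases).
Proof. by vm_compute. Qed.
Lemma witness_U27_certs :
  all (fun c => cdet (chart_U27 int witness_U27) c != 0) (pair_certs pairs7).
Proof. by vm_compute. Qed.

Section ChartVarieties.
Variable R : realType.
Local Notation C := (R[i]).

Lemma crow_chart (F : chart) (th : nat -> C) k : (k < 7)%N -> crow (chart_conf F th) k = F C th k.
Proof. by move=> hk; rewrite /crow rowv_mkconf /= inordK. Qed.

Lemma triples7_lt c : c \in triples7 -> [&& c.1.1 < 7, c.1.2 < 7 & c.2 < 7]%N.
Proof. by move: c; apply/allP; vm_compute. Qed.

Lemma pairs7_lt p : p \in pairs7 -> (p.1 < 7)%N && (p.2 < 7)%N.
Proof. by move: p; apply/allP; vm_compute. Qed.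

Lemma pair_pts_collinear (O n1 n2 y : vec3 C) lam b :
  det3 (pair_pts O n1 n2 y lam b).1 (pair_pts O n1 n2 y lam b).2 O = 0.
Proof.
have key x n : det3 x (cross n (vscale lam (cross O x))) O = 0.
  by rewrite det3_rot /det3 cross_vscaler dot_vscale dot_cross_r mulr0.
case: b; first exact: key.
by rewrite det3_swap12 key oppr0.
Qed.

Lemma pair_pts1 (O n1 n2 y : vec3 C) lam b :
  (pair_pts O n1 n2 y lam b).1 = cross n1 (if b then y else vscale lam (cross O (cross n2 y))).
Proof. by case: b. Qed.

Lemma pair_pts2 (O n1 n2 y : vec3 C) lam b :
  (pair_pts O n1 n2 y lam b).2 = cross n2 (if b then vscale lam (cross O (cross n1 y)) else y).
Proof. by case: b. Qed.

Lemma chart_N_realization bA bB bC (th : nat -> C) :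
  (forall c, c \in some_certs N_bases -> cdet (chart_N bA bB bC C th) c != 0) ->
  is_realization N_dep (chart_conf (chart_N bA bB bC) th).
Proof.
move=> hc; apply: realization_N => [t|c cin].
  rewrite !inE => /or4P [| | | /orP []] /eqP ->; rewrite /ldet /= !crow_chart // /chart_N /=.
  - exact: pair_pts_collinear.
  - by rewrite det3_swap23 pair_pts_collinear oppr0.
  - by rewrite det3_swap12 pair_pts_collinear oppr0.
  - by rewrite !pair_pts1 det3_cross_common.
  - by rewrite !pair_pts2 det3_cross_common.
have := hc _ (map_f (fun t => (t.1.1, t.1.2, Some t.2)) cin).
move: cin; rewrite mem_filter => /andP [_ /triples7_lt /and3P [h1 h2 h3]].
by rewrite /cdet /= !crow_chart.
Qed.

Lemma chart_N6_realization (th : nat -> C) :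
  (forall c, c \in some_certs N6_bases -> cdet (chart_N6 C th) c != 0) ->
  is_realization N6_dep (chart_conf chart_N6 th).
Proof.
move=> hc; apply: realization_N6 => [||| c cin].
- by rewrite crow_chart.
- by rewrite /ldet /= !crow_chart // /chart_N6 /= det3_cross_common.
- by rewrite /ldet /= !crow_chart // /chart_N6 /= det3_cross_common.
have := hc _ (map_f (fun t => (t.1.1, t.1.2, Some t.2)) cin).
move: cin; rewrite mem_filter => /andP [_ /triples7_lt /and3P [h1 h2 h3]].
by rewrite /cdet /= !crow_chart.
Qed.

Lemma chart_U27_realization (th : nat -> C) :
  (forall c, c \in pair_certs pairs7 -> cdet (chart_U27 C th) c != 0) ->
  is_realization U27_dep (chart_conf chart_U27 th).
Proof.
move=> hc; apply: (realization_U27 (w := pair_ref C) _ U27_certified) => [x y z _|c cin].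
  by rewrite !rowv_mkconf /chart_U27 !ltn_ord det3_cross_common.
have := hc _ (map_f (fun p => (p.1, p.2, None)) cin).
by case/andP: (pairs7_lt cin) => h1 h2; rewrite /cdet /= !crow_chart.
Qed.

Lemma V_chart_N bA bB bC (th : nat -> C) : V N_dep (chart_conf (chart_N bA bB bC) th).
Proof.
exact: (chart_closure (R := R) (chart_N_natural bA bB bC) (chart_N_homogeneous bA bB bC)
  (@chart_N_realization bA bB bC) (witness_N_certs bA bB bC)).
Qed.

Lemma V_chart_N6 (th : nat -> C) : V N6_dep (chart_conf chart_N6 th).
Proof.
exact: (chart_closure (R := R) chart_N6_natural chart_N6_homogeneous chart_N6_realization
  witness_N6_certs).
Qed.

Lemma V_chart_U27 (th : nat -> C) : V U27_dep (chart_conf chart_U27 th).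
Proof.
exact: (chart_closure (R := R) chart_U27_natural chart_U27_homogeneous chart_U27_realization
  witness_U27_certs).
Qed.

End ChartVarieties.

Section VarietiesInCircuitVariety.
Variable R : realType.
Local Notation C := (R[i]).
Implicit Types g : conf R.

Definition coord_vec (k : nat) : vec3 {mpoly C[7 * 3]} :=
  ('X_(mxvec_index (inord k : 'I_7) i0), 'X_(mxvec_index (inord k : 'I_7) i1),
   'X_(mxvec_index (inord k : 'I_7) i2)).

Definition ldet_poly (t : seq nat) :=
  det3 (coord_vec (nth 0 t 0)) (coord_vec (nth 0 t 1)) (coord_vec (nth 0 t 2)).

Lemma meval_ldet_poly g t : meval (coords g) (ldet_poly t) = ldet g t.
Proof. by rewrite rmorph_det3 /vmap /coord_vec /= !mevalXU /coords !mxvecE. Qed.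

Lemma V_ldet (dep : matroid7) g t : (forall h : conf R, is_realization dep h -> ldet h t = 0) ->
  V dep g -> ldet g t = 0.
Proof. by move=> h0 hV; rewrite -meval_ldet_poly; apply: hV => h /h0; rewrite meval_ldet_poly. Qed.

Lemma V_circuit_variety (dep : matroid7) g : (forall t, t \in Nlines -> dep (nset t)) ->
  V dep g -> circuit_variety N_dep g.
Proof.
move=> hdep hV; apply/circuit_variety_N_lines => t tin; apply: (V_ldet _ hV) => h hr.
by apply/lin_dep_Nlines => //; apply/hr/hdep.
Qed.

End VarietiesInCircuitVariety.

(** * Moving a pair of points collinear with [O] *)

Section PairPerturbation.
Variable F : fieldType.
Implicit Types (c t : F) (a b u v w x y z n O : vec3 F).

(* [(x, z)] is [pair_pts O m1 m2 y lam true] for some [y] and [lam]. *)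
Definition pair_free O (m1 m2 : vec3 F) x z :=
  exists y lam, x = cross m1 y /\ z = cross m2 (vscale lam (cross O x)).

Lemma pair_free_zero O (m1 m2 : vec3 F) x : m1 != vec0 -> dot x m1 = 0 -> pair_free O m1 m2 x vec0.
Proof.
move=> hm hx; have [y hy] := orth_cross_surj hm hx.
by exists y, 0; rewrite hy vscale0 cross0r.
Qed.

Lemma pair_free_proj O (m1 m2 : vec3 F) x z : dot O m2 != 0 -> cross x O != vec0 -> m1 != vec0 ->
  dot x m1 = 0 -> dot z m2 = 0 -> det3 x z O = 0 -> pair_free O m1 m2 x z.
Proof.
move=> hO hx hm hx1 hz hd; have [y hy] := orth_cross_surj hm hx1.
have hP : cross m2 (cross O x) != vec0.
  have e : cross (cross m2 (cross O x)) O = vscale (- dot m2 O) (cross x O) by vring.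
  apply: contraNneq hx => hP0; move: e; rewrite hP0 cross0l => /esym/vscale_eq0 [].
    by move/eqP; rewrite oppr_eq0 dotC (negPf hO).
  by move=> ->.
have hc : cross z (cross m2 (cross O x)) = vec0.
  by rewrite cross_cross -[dot z _]/(det3 z O x) -det3_rot hd hz oppr0 !vscale0 vadd0r.
have [lam hl] := cross_eq0_parallel hP hc.
by exists y, lam; rewrite cross_vscaler -hl.
Qed.

Lemma pair_free_atO O (m1 m2 : vec3 F) x c : m1 != vec0 -> dot O m2 = 0 -> dot x m2 != 0 ->
  dot x m1 = 0 -> pair_free O m1 m2 x (vscale c O).
Proof.
move=> hm hO hx2 hx1; have [y hy] := orth_cross_surj hm hx1.
exists y, (c / dot x m2); split=> //.
rewrite cross_vscaler cross_cross (dotC m2 O) hO oppr0 vscale0 vadd0r (dotC m2 x) vscaleA.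
by rewrite mulfVK.
Qed.

Lemma pair_free_meet O (m1 m2 : vec3 F) x z : O != vec0 -> dot O m1 = 0 -> dot O m2 = 0 ->
  cross m1 m2 != vec0 -> cross x O != vec0 -> m1 != vec0 ->
  dot x m1 = 0 -> dot z m2 = 0 -> det3 x z O = 0 -> pair_free O m1 m2 x z.
Proof.
move=> On hO1 hO2 hN hx hm hx1 hz hd.
have hx2 : dot x m2 != 0.
  apply: contraNneq hx => hx2.
  have [kx ha] : exists kx, x = vscale kx (cross m1 m2).
    by apply: cross_eq0_parallel hN _; rewrite cross_cross hx1 hx2 oppr0 !vscale0 vadd0r.
  have [kO hb] : exists kO, O = vscale kO (cross m1 m2).
    by apply: cross_eq0_parallel hN _; rewrite cross_cross hO1 hO2 oppr0 !vscale0 vadd0r.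
  by apply/eqP; rewrite ha hb; vring.
have hzO : cross z O = vec0.
  have e : vadd (vadd (vscale (dot m2 x) (cross z O)) (vscale (dot m2 z) (cross O x)))
             (vscale (dot m2 O) (cross x z)) = vscale (det3 x z O) m2 by vring.
  move: e; rewrite hd (dotC m2 z) hz (dotC m2 O) hO2 !vscale0 !vadd0r => /vscale_eq0 [|//].
  by move/eqP; rewrite dotC (negPf hx2).
have [c ->] := cross_eq0_parallel On hzO.
exact: pair_free_atO.
Qed.

Definition on_pair_chart O (n1 n2 : vec3 F) a b :=
  exists bb y lam, pair_pts O n1 n2 y lam bb = (a, b).

Lemma pair_free_chart O (n1 n2 : vec3 F) a b :
  pair_free O n1 n2 a b \/ pair_free O n2 n1 b a -> on_pair_chart O n1 n2 a b.
Proof.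
by case=> [[y [lam [-> ->]]]|[y [lam [-> ->]]]]; [exists true | exists false]; exists y, lam.
Qed.

Definition pair_perturbable O (n1 n2 : vec3 F) a b := exists wa wb, forall t, t != 0 ->
  on_pair_chart O n1 n2 (vadd a (vscale t wa)) (vadd b (vscale t wb)).

Lemma pair_perturbable_static O (n1 n2 : vec3 F) a b :
  pair_free O n1 n2 a b \/ pair_free O n2 n1 b a -> pair_perturbable O n1 n2 a b.
Proof.
by move=> h; exists vec0, vec0 => t _; rewrite !vscaler0 !vadd0r; apply: pair_free_chart.
Qed.

Lemma pair_perturbable_swap O (n1 n2 : vec3 F) a b :
  pair_perturbable O n2 n1 b a -> pair_perturbable O n1 n2 a b.
Proof.
case=> wb [wa h]; exists wa, wb => t /h [bb [y [lam e]]]; exists (~~ bb), y, lam.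
have -> : pair_pts O n1 n2 y lam (~~ bb) =
          ((pair_pts O n2 n1 y lam bb).2, (pair_pts O n2 n1 y lam bb).1) by case: bb {e}.
by rewrite e.
Qed.

Lemma cross_line_O a w O t :
  cross a O = vec0 -> cross (vadd a (vscale t w)) O = vscale t (cross w O).
Proof.
have -> : cross (vadd a (vscale t w)) O = vadd (cross a O) (vscale t (cross w O)) by vring.
by move=> ->; vring.
Qed.

Lemma dot_line a w n t : dot (vadd a (vscale t w)) n = dot a n + t * dot w n.
Proof. vring. Qed.

Lemma pair_perturbable_off O (n1 n2 : vec3 F) a b : O != vec0 -> n1 != vec0 -> n2 != vec0 ->
  dot O n2 != 0 -> dot a n1 = 0 -> dot b n2 = 0 -> det3 a b O = 0 ->
  pair_perturbable O n1 n2 a b.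
Proof.
move=> On n1n n2n hO2 ha hb hd.
have [->|an] := eqVneq a vec0; first by apply/pair_perturbable_static; right; apply: pair_free_zero.
have [->|bn] := eqVneq b vec0; first by apply/pair_perturbable_static; left; apply: pair_free_zero.
have [aO|aO] := eqVneq (cross a O) vec0; last first.
  by apply/pair_perturbable_static; left; apply: pair_free_proj.
have [c hc] := cross_eq0_parallel On aO.
have hO1 : dot O n1 = 0.
  move: ha; rewrite hc dot_vscale => /eqP; rewrite mulf_eq0 => /orP [/eqP c0|/eqP //].
  by move: an; rewrite hc c0 vscale0 eqxx.
have [hb1|hb1] := eqVneq (dot b n1) 0; last first.
  by apply/pair_perturbable_static; right; rewrite hc; apply: pair_free_atO.
have bO : cross b O != vec0.
  apply/eqP => /(cross_eq0_parallel On) [c' hc']; move: hb; rewrite hc' dot_vscale => /eqP.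
  rewrite mulf_eq0 (negPf hO2) orbF => /eqP c0.
  by move: bn; rewrite hc' c0 vscale0 eqxx.
(* Here [a] is a multiple of [O] and [b] lies on both lines: moving [a] in the direction
   of [b] keeps it on [n1] and takes it off [O]. *)
exists b, vec0 => t ht; apply: pair_free_chart; left; rewrite vscaler0 vadd0r.
apply: pair_free_proj => //.
- rewrite cross_line_O //; apply/eqP => /vscale_eq0 [/eqP|/eqP]; last exact/negP.
  exact/negP.
- by rewrite dot_line ha hb1 mulr0 addr0.
- by rewrite hc; vring.
Qed.

Lemma pair_perturbable_meet O (n1 n2 : vec3 F) a b : O != vec0 -> n1 != vec0 -> n2 != vec0 ->
  dot O n1 = 0 -> dot O n2 = 0 -> cross n1 n2 != vec0 ->
  dot a n1 = 0 -> dot b n2 = 0 -> det3 a b O = 0 -> pair_perturbable O n1 n2 a b.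
Proof.
move=> On n1n n2n hO1 hO2 hN ha hb hd.
have hN21 : cross n2 n1 != vec0.
  rewrite crossC; apply: contra hN => /eqP/vscale_eq0 [/eqP|-> //].
  by rewrite oppr_eq0 oner_eq0.
have hd_swap : det3 b a O = 0 by rewrite det3_swap12 hd oppr0.
have [->|an] := eqVneq a vec0; first by apply/pair_perturbable_static; right; apply: pair_free_zero.
have [->|bn] := eqVneq b vec0; first by apply/pair_perturbable_static; left; apply: pair_free_zero.
have [aO|aO] := eqVneq (cross a O) vec0; last first.
  by apply/pair_perturbable_static; left; apply: pair_free_meet.
have [bO|bO] := eqVneq (cross b O) vec0; last first.
  by apply/pair_perturbable_static; right; apply: pair_free_meet.
have [c hc] := cross_eq0_parallel On bO.
have [w [hw1 hw2]] := orth_witness hN.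
have wO : cross w O != vec0.
  apply/eqP => /(cross_eq0_parallel On) [k hk]; move: hw2.
  by rewrite hk dot_vscale hO2 mulr0 eqxx.
(* Both [a] and [b] are multiples of the meet [O] of the lines: move [a] along [n1]. *)
exists w, vec0 => t ht; apply: pair_free_chart; left; rewrite vscaler0 vadd0r.
apply: pair_free_meet => //.
- rewrite cross_line_O //; apply/eqP => /vscale_eq0 [/eqP|/eqP]; last exact/negP.
  exact/negP.
- by rewrite dot_line ha hw1 mulr0 addr0.
- by rewrite hc; vring.
Qed.

Lemma pair_perturbable_all O (n1 n2 : vec3 F) a b : O != vec0 -> n1 != vec0 -> n2 != vec0 ->
  ~ [/\ dot O n1 = 0, dot O n2 = 0 & cross n1 n2 = vec0] ->
  dot a n1 = 0 -> dot b n2 = 0 -> det3 a b O = 0 -> pair_perturbable O n1 n2 a b.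
Proof.
move=> On n1n n2n hO ha hb hd.
have [hO2|hO2] := eqVneq (dot O n2) 0; last exact: pair_perturbable_off.
have [hO1|hO1] := eqVneq (dot O n1) 0.
  have [hN|hN] := eqVneq (cross n1 n2) vec0; first by case: hO.
  exact: pair_perturbable_meet.
apply: pair_perturbable_swap; apply: pair_perturbable_off => //.
by rewrite det3_swap12 hd oppr0.
Qed.

End PairPerturbation.

(** * Covering the circuit variety *)

Section Cover.
Variable R : realType.
Local Notation C := (R[i]).
Implicit Types g : conf R.

Definition params (vs : seq (vec3 C)) (ls : seq C) : nat -> C :=
  nth 0 (flatten [seq [:: vx v; vy v; vz v] | v <- vs] ++ ls).

Lemma ord7_cases (P : nat -> Prop) : P 0 -> P 1 -> P 2 -> P 3 -> P 4 -> P 5 -> P 6 ->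
  forall k, (k < 7)%N -> P k.
Proof. by move=> ? ? ? ? ? ? ? [|[|[|[|[|[|[|k]]]]]]]. Qed.

Lemma conf_eq_chart g (F : chart) (th : nat -> C) :
  (forall k, (k < 7)%N -> crow g k = F C th k) -> g = chart_conf F th.
Proof.
move=> h; rewrite -[LHS]mkconf_rowv; congr mkconf; apply: boolp.funext => i.
by rewrite -h ?ltn_ord // /crow inord_val.
Qed.

Lemma cover_N6 g : crow g 5 = vec0 -> ldet g [:: 1; 2; 4] = 0 -> ldet g [:: 0; 3; 6] = 0 ->
  V N6_dep g.
Proof.
move=> h5 /det3_eq0_normal [n1 [n1n d1 d2 d4]] /det3_eq0_normal [n2 [n2n d0 d3 d6]].
have [y1 e1] := orth_cross_surj n1n d1; have [y2 e2] := orth_cross_surj n1n d2.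
have [y4 e4] := orth_cross_surj n1n d4; have [y0 e0] := orth_cross_surj n2n d0.
have [y3 e3] := orth_cross_surj n2n d3; have [y6 e6] := orth_cross_surj n2n d6.
have -> : g = chart_conf chart_N6 (params [:: n1; n2; y0; y1; y2; y3; y4; vec0; y6] [::]).
  by apply: conf_eq_chart; apply: ord7_cases; rewrite /chart_N6 /params /pv /= ?vec3_eta.
exact: V_chart_N6.
Qed.

Lemma cover_U27 g n : n != vec0 -> (forall k, (k < 7)%N -> dot (crow g k) n = 0) -> V U27_dep g.
Proof.
move=> nn h.
have [y0 e0] := orth_cross_surj nn (h 0 isT); have [y1 e1] := orth_cross_surj nn (h 1 isT).
have [y2 e2] := orth_cross_surj nn (h 2 isT); have [y3 e3] := orth_cross_surj nn (h 3 isT).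
have [y4 e4] := orth_cross_surj nn (h 4 isT); have [y5 e5] := orth_cross_surj nn (h 5 isT).
have [y6 e6] := orth_cross_surj nn (h 6 isT).
have -> : g = chart_conf chart_U27 (params [:: n; y0; y1; y2; y3; y4; y5; y6] [::]).
  by apply: conf_eq_chart; apply: ord7_cases; rewrite /chart_U27 /params /pv /= ?vec3_eta.
exact: V_chart_U27.
Qed.

Lemma eval_poly_line (u w : vec3 C) s :
  vmap (horner_eval s) (vadd (vmap polyC u) (vscale 'X (vmap polyC w))) = vadd u (vscale s w).
Proof.
by vdestr; rewrite /vmap /vadd /vscale /vx /vy /vz /= !horner_evalE !hornerE.
Qed.

(* Moving the pairs (2,3), (1,6), (4,0) as in [pair_perturbable_all] gives a straight line of
   configurations through [g] whose other points lie in charts of [N]. *)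
Lemma cover_N g (n1 n2 : vec3 C) : crow g 5 != vec0 -> n1 != vec0 -> n2 != vec0 ->
  ~ [/\ dot (crow g 5) n1 = 0, dot (crow g 5) n2 = 0 & cross n1 n2 = vec0] ->
  dot (crow g 1) n1 = 0 -> dot (crow g 2) n1 = 0 -> dot (crow g 4) n1 = 0 ->
  dot (crow g 0) n2 = 0 -> dot (crow g 3) n2 = 0 -> dot (crow g 6) n2 = 0 ->
  det3 (crow g 2) (crow g 3) (crow g 5) = 0 -> det3 (crow g 1) (crow g 6) (crow g 5) = 0 ->
  det3 (crow g 4) (crow g 0) (crow g 5) = 0 -> V N_dep g.
Proof.
move=> On n1n n2n hO d1 d2 d4 d0 d3 d6 hA hB hC; set O := crow g 5 in On hO hA hB hC.
have [wA2 [wA3 pA]] := pair_perturbable_all On n1n n2n hO d2 d3 hA.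
have [wB1 [wB6 pB]] := pair_perturbable_all On n1n n2n hO d1 d6 hB.
have [wC4 [wC0 pC]] := pair_perturbable_all On n1n n2n hO d4 d0 hC.
pose W k := match k with
  | 0 => wC0 | 1 => wB1 | 2 => wA2 | 3 => wA3 | 4 => wC4 | 6 => wB6 | _ => vec0 end.
pose G (i : 'I_7) := vadd (vmap polyC (crow g i)) (vscale 'X (vmap polyC (W (val i)))).
have GE s : eval_curve G s = mkconf (fun i => vadd (crow g i) (vscale s (W (val i)))).
  by congr mkconf; apply: boolp.funext => i; rewrite eval_poly_line.
have -> : g = eval_curve G 0.
  by rewrite GE -[LHS]mkconf_rowv; congr mkconf; apply: boolp.funext => i;
    rewrite vscale0 vadd0r /crow inord_val.
apply: (curve_closure (D := 'X)) => [|s]; first by rewrite polyX_eq0.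
rewrite hornerX => /[dup] hs /pA [bA [yA [lA eA]]].
have [bB [yB [lB eB]]] := pB s hs; have [bC [yC [lC eC]]] := pC s hs.
have -> : eval_curve G s =
    chart_conf (chart_N bA bB bC) (params [:: O; n1; n2; yA; yB; yC] [:: lA; lB; lC]).
  rewrite GE; congr mkconf; apply: boolp.funext => -[k hk] /=.
  move: k hk; apply: ord7_cases;
    by rewrite /chart_N /params /pv /= ?vec3_eta ?eA ?eB ?eC ?vscaler0 ?vadd0r.
exact: V_chart_N.
Qed.

End Cover.

Lemma cover_Nlines (R : realType) (g : conf R) : (forall t, t \in Nlines -> ldet g t = 0) ->
  V N_dep g \/ V U27_dep g \/ V N6_dep g.
Proof.
move=> hl.
have [h5|On] := eqVneq (crow g 5) vec0.
  by right; right; apply: cover_N6; rewrite // hl.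
have /det3_eq0_normal [n1 [n1n d1 d2 d4]] : ldet g [:: 1; 2; 4] = 0 by apply: hl.
have /det3_eq0_normal [n2 [n2n d0 d3 d6]] : ldet g [:: 0; 3; 6] = 0 by apply: hl.
have [/and3P [/eqP h1 /eqP h2 /eqP hN]|hO] :=
  boolP [&& dot (crow g 5) n1 == 0, dot (crow g 5) n2 == 0 & cross n1 n2 == vec0].
  right; left; apply: (cover_U27 n1n).
  have [c hc] := cross_eq0_parallel n2n hN.
  have e x : dot x n2 = 0 -> dot x n1 = 0 by move=> hx; rewrite hc dotC dot_vscale dotC hx mulr0.
  apply: ord7_cases;
    [exact: e d0 | exact: d1 | exact: d2 | exact: e d3 | exact: d4 | exact: h1 | exact: e d6].
left; apply: (cover_N On n1n n2n _ d1 d2 d4 d0 d3 d6).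
- by case=> h1 h2 hN; move: hO; rewrite h1 h2 hN !eqxx.
- exact: (hl [:: 2; 3; 5]).
- have := hl [:: 1; 5; 6] isT; rewrite /ldet /= det3_swap23 => /eqP.
  by rewrite oppr_eq0 => /eqP.
- have := hl [:: 0; 4; 5] isT; rewrite /ldet /= det3_swap12 => /eqP.
  by rewrite oppr_eq0 => /eqP.
Qed.

Theorem mainTheorem10 (R : realType) (g : conf R) :
  circuit_variety N_dep g <->
  (V N_dep g \/ V U27_dep g \/ V N6_dep g).
Proof.
split; first by move/circuit_variety_N_lines; apply: cover_Nlines.
case=> [|[|]] /V_circuit_variety; apply.
- exact: Nlines_N_dep.
- exact: Nlines_U27_dep.
- exact: Nlines_N6_dep.
Qed.
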